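(* For every left-c.e. metric space $\mathcal{M}=(M,d,(p_k)_{k\in\mathbb{N}})$ there exists a left-c.e. ultrametric space $\mathcal{A}$ that has no computable isometric embedding into $\mathcal{M}$. In particular, there is no left-c.e. metric space universal for all left-c.e. metric spaces (without a bound on the diameter) under computable isometric embeddings.
   Context: $\mathcal{M}=(M,d,(p_k))$ is a left-c.e. metric space if it is a Polish metric space with dense sequence of special points $(p_k)$ and $d(p_i,p_k)$ is a left-c.e. real uniformly in $i,k$. An ultrametric space is one satisfying $d(x,z)\le\max(d(x,y),d(y,z))$. A Cauchy name in $\mathcal{M}$ is $g:\mathbb{N}\to\mathbb{N}$ with $d(p_{g(i)},p_{g(k)})\le 2^{-i}$ for $i\le k$. An isometric embedding $f$ of $(A,d_A,(q_k))$ into $\mathcal{M}$ is computable if uniformly in $k$ one can compute a Cauchy name for $f(q_k)$. *)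

From Stdlib Require Import Reals QArith Qreals Lra Cantor.
Open Scope R_scope.

(* ---------- A model of computation: mu-recursive functions on nat ----------
   All functions are unary; tuples are coded with the Cantor pairing
   Cantor.to_nat / Cantor.of_nat (a bijection nat*nat <-> nat). *)
Inductive rec_code : Type :=
| RZero : rec_code
| RSucc : rec_code
| RId : rec_code
| RFst : rec_code
| RSnd : rec_code
| RPair : rec_code -> rec_code -> rec_code
| RComp : rec_code -> rec_code -> rec_code
| RPrimRec : rec_code -> rec_code -> rec_code
    (* h <x,0> = f x ;  h <x,n+1> = g <x,<n,h <x,n>>> *)
| RMin : rec_code -> rec_code.

Inductive rec_eval : rec_code -> nat -> nat -> Prop :=
| ev_zero x : rec_eval RZero x 0
| ev_succ x : rec_eval RSucc x (S x)
| ev_id x : rec_eval RId x x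
| ev_fst n : rec_eval RFst n (fst (of_nat n))
| ev_snd n : rec_eval RSnd n (snd (of_nat n))
| ev_pair f g x a b :
    rec_eval f x a -> rec_eval g x b -> rec_eval (RPair f g) x (to_nat (a, b))
| ev_comp f g x y z :
    rec_eval g x y -> rec_eval f y z -> rec_eval (RComp f g) x z
| ev_prec0 f g x r :
    rec_eval f x r -> rec_eval (RPrimRec f g) (to_nat (x, 0%nat)) r
| ev_precS f g x n r r' :
    rec_eval (RPrimRec f g) (to_nat (x, n)) r ->
    rec_eval g (to_nat (x, to_nat (n, r))) r' ->
    rec_eval (RPrimRec f g) (to_nat (x, S n)) r'
| ev_min f x n :
    rec_eval f (to_nat (x, n)) 0 ->
    (forall m, (m < n)%nat -> exists v, rec_eval f (to_nat (x, m)) (S v)) ->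
    rec_eval (RMin f) x n.

Definition computable (h : nat -> nat) : Prop :=
  exists c : rec_code, forall x, rec_eval c x (h x).

Definition zdec (a : nat) : Z :=
  let (s, m) := of_nat a in
  match s with O => Z.of_nat m | _ => (- Z.of_nat m)%Z end.

(* n = <a,b> codes the rational zdec(a) / (b+1). Every rational has a code. *)
Definition qdec (n : nat) : Q :=
  let (a, b) := of_nat n in Qmake (zdec a) (Pos.of_succ_nat b).

Definition qR (n : nat) : R := Q2R (qdec n).

Definition is_metric {M : Type} (d : M -> M -> R) : Prop :=
  (forall x y, d x y = 0 <-> x = y) /\
  (forall x y, d x y = d y x) /\
  (forall x y z, d x z <= d x y + d y z).

Definition is_ultrametric {M : Type} (d : M -> M -> R) : Prop :=
  forall x y z, d x z <= Rmax (d x y) (d y z).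

Definition converges_to {M : Type} (d : M -> M -> R) (u : nat -> M) (x : M) : Prop :=
  forall eps, eps > 0 -> exists N, forall n, (n >= N)%nat -> d (u n) x < eps.

Definition cauchy_seq {M : Type} (d : M -> M -> R) (u : nat -> M) : Prop :=
  forall eps, eps > 0 -> exists N, forall n m, (n >= N)%nat -> (m >= N)%nat -> d (u n) (u m) < eps.

Definition complete {M : Type} (d : M -> M -> R) : Prop :=
  forall u : nat -> M, cauchy_seq d u -> exists x, converges_to d u x.

Definition dense_seq {M : Type} (d : M -> M -> R) (p : nat -> M) : Prop :=
  forall x eps, eps > 0 -> exists k, d x (p k) < eps.

Definition polish_metric_space {M : Type} (d : M -> M -> R) (p : nat -> M) : Prop :=
  is_metric d /\ complete d /\ dense_seq d p.

Definition left_ce_uniform {M : Type} (d : M -> M -> R) (p : nat -> M) : Prop :=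
  exists g : nat -> nat, computable g /\
    forall i k,
      (forall s, qR (g (to_nat (i, to_nat (k, s)))) <= qR (g (to_nat (i, to_nat (k, S s))))) /\
      Un_cv (fun s => qR (g (to_nat (i, to_nat (k, s))))) (d (p i) (p k)).

Definition left_ce_metric_space {M : Type} (d : M -> M -> R) (p : nat -> M) : Prop :=
  polish_metric_space d p /\ left_ce_uniform d p.

Definition cauchy_name {M : Type} (d : M -> M -> R) (p : nat -> M) (g : nat -> nat) : Prop :=
  forall i k, (i <= k)%nat -> d (p (g i)) (p (g k)) <= / 2 ^ i.

Definition cauchy_name_for {M : Type} (d : M -> M -> R) (p : nat -> M)
  (g : nat -> nat) (x : M) : Prop :=
  cauchy_name d p g /\ converges_to d (fun i => p (g i)) x.

Definition isometric_embedding {A M : Type} (dA : A -> A -> R) (dM : M -> M -> R)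
  (f : A -> M) : Prop :=
  forall x y, dM (f x) (f y) = dA x y.

Definition computable_map {A M : Type} (q : nat -> A) (dM : M -> M -> R) (p : nat -> M)
  (f : A -> M) : Prop :=
  exists h : nat -> nat, computable h /\
    forall k, cauchy_name_for dM p (fun i => h (to_nat (k, i))) (f (q k)).

From Stdlib Require Import Reals QArith Qreals Cantor.
From Stdlib Require Import ZArith Lra Lia Arith Bool Classical ClassicalEpsilon.
Open Scope R_scope.
Open Scope nat_scope.

(** The space is [nat], the points [2e] and [2e+1] forming the [e]-th pair, with
    radius [r e]; distinct points are at distance the larger radius of their pairs.
    This is an ultrametric whose nonzero distances are at least 1, hence complete,
    and it is left-c.e. as soon as each [r e] is the limit of a nondecreasing
    sequence of integers computable uniformly in [e].  At stage [s], using a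
    universal enumeration of the graphs of all mu-recursive codes, we wait until the
    code with index [e] has output the first terms [u], [v] of the Cauchy names of
    the images of [2e] and [2e+1], and then take 4 plus the integer part of the
    stage-[s] lower approximation of [d (p u) (p v)].  If that code computed an
    isometric embedding [f], then [f (2e)] and [f (2e+1)] would lie within 1 of
    [p u] and [p v], so [r e = d (f (2e)) (f (2e+1)) <= d (p u) (p v) + 2 < r e]. *)

(** * Computable functions *)

Definition unpair1 (z : nat) : nat := fst (of_nat z).
Definition unpair2 (z : nat) : nat := snd (of_nat z).

Lemma unpair1_pair a b : unpair1 (to_nat (a, b)) = a.
Proof. unfold unpair1; rewrite cancel_of_to; reflexivity. Qed.

Lemma unpair2_pair a b : unpair2 (to_nat (a, b)) = b.
Proof. unfold unpair2; rewrite cancel_of_to; reflexivity. Qed.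

Lemma pair_unpair z : to_nat (unpair1 z, unpair2 z) = z.
Proof.
  unfold unpair1, unpair2; rewrite <- surjective_pairing; apply cancel_to_of.
Qed.

Ltac simpl_unpair := repeat rewrite ?unpair1_pair, ?unpair2_pair.
Ltac simpl_unpair_in H := repeat rewrite ?unpair1_pair, ?unpair2_pair in H.

Lemma computable_ext f g : computable f -> (forall x, f x = g x) -> computable g.
Proof. intros [c Hc] E; exists c; intro x; rewrite <- E; apply Hc. Qed.

Lemma computable_id : computable (fun x => x).
Proof. exists RId; intro; constructor. Qed.

Lemma computable_succ : computable S.
Proof. exists RSucc; intro; constructor. Qed.

Lemma computable_unpair1 : computable unpair1.
Proof. exists RFst; intro; constructor. Qed.

Lemma computable_unpair2 : computable unpair2.
Proof. exists RSnd; intro; constructor. Qed.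

Lemma computable_comp f g :
  computable f -> computable g -> computable (fun x => f (g x)).
Proof. intros [cf Hf] [cg Hg]; exists (RComp cf cg); intro; econstructor; eauto. Qed.

Lemma computable_pair f g :
  computable f -> computable g -> computable (fun x => to_nat (f x, g x)).
Proof. intros [cf Hf] [cg Hg]; exists (RPair cf cg); intro; constructor; eauto. Qed.

Lemma computable_const n : computable (fun _ => n).
Proof.
  induction n as [|n IH]; [exists RZero; intro; constructor|].
  exact (computable_comp S _ computable_succ IH).
Qed.

Lemma computable_prim_rec (F : nat -> nat -> nat) f g :
  computable f -> computable g ->
  (forall x, F x 0 = f x) ->
  (forall x n, F x (S n) = g (to_nat (x, to_nat (n, F x n)))) ->
  computable (fun z => F (unpair1 z) (unpair2 z)).
Proof.
  intros [cf Hf] [cg Hg] F0 FS; exists (RPrimRec cf cg).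
  assert (H : forall x n, rec_eval (RPrimRec cf cg) (to_nat (x, n)) (F x n)).
  { intros x n; induction n; [rewrite F0|rewrite FS]; econstructor; eauto. }
  intro z; rewrite <- (pair_unpair z) at 1; apply H.
Qed.

Class Computable1 (f : nat -> nat) := computable1 : computable f.
Class Computable2 (F : nat -> nat -> nat) :=
  computable2 : computable (fun z => F (unpair1 z) (unpair2 z)).
Class Computable3 (F : nat -> nat -> nat -> nat) :=
  computable3 : computable (fun z => F (unpair1 z) (unpair1 (unpair2 z)) (unpair2 (unpair2 z))).
Class ComputablePred1 (P : nat -> bool) :=
  computable_pred1 : computable (fun z => Nat.b2n (P z)).
Class ComputablePred2 (P : nat -> nat -> bool) :=
  computable_pred2 : computable (fun z => Nat.b2n (P (unpair1 z) (unpair2 z))).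

Lemma computable_app1 f `{Computable1 f} a :
  computable a -> computable (fun x => f (a x)).
Proof. intros; apply computable_comp; auto. Qed.

Lemma computable_app2 F `{Computable2 F} a b :
  computable a -> computable b -> computable (fun x => F (a x) (b x)).
Proof.
  intros ca cb; eapply computable_ext.
  - exact (computable_comp _ _ H (computable_pair _ _ ca cb)).
  - intro; cbv beta; simpl_unpair; reflexivity.
Qed.

Lemma computable_app3 F `{Computable3 F} a b c :
  computable a -> computable b -> computable c ->
  computable (fun x => F (a x) (b x) (c x)).
Proof.
  intros ca cb cc; eapply computable_ext.
  - exact (computable_comp _ _ H (computable_pair _ _ ca (computable_pair _ _ cb cc))).
  - intro; cbv beta; simpl_unpair; reflexivity.
Qed.

Lemma computable_papp1 P `{ComputablePred1 P} a :
  computable a -> computable (fun x => Nat.b2n (P (a x))).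
Proof. intros; apply (computable_comp (fun z => Nat.b2n (P z))); auto. Qed.

Lemma computable_papp2 P `{ComputablePred2 P} a b :
  computable a -> computable b -> computable (fun x => Nat.b2n (P (a x) (b x))).
Proof.
  intros ca cb; eapply computable_ext.
  - exact (computable_comp _ _ H (computable_pair _ _ ca cb)).
  - intro; cbv beta; simpl_unpair; reflexivity.
Qed.

Definition ifz (c a b : nat) : nat := match c with 0 => b | _ => a end.

#[export] Instance computable_ifz : Computable3 ifz.
Proof.
  assert (H : computable (fun z => (fun x n => ifz n (unpair1 x) (unpair2 x))
                                     (unpair1 z) (unpair2 z))).
  { apply (computable_prim_rec (fun x n => ifz n (unpair1 x) (unpair2 x))
             unpair2 (fun z => unpair1 (unpair1 z))).
    - exact computable_unpair2.
    - exact (computable_comp _ _ computable_unpair1 computable_unpair1).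
    - reflexivity.
    - intros; cbn [ifz]; simpl_unpair; reflexivity. }
  unfold Computable3; eapply computable_ext.
  - apply (computable_comp _ (fun z => to_nat (unpair2 z, unpair1 z)) H).
    exact (computable_pair _ _ computable_unpair2 computable_unpair1).
  - intro; cbv beta; simpl_unpair; reflexivity.
Qed.

Lemma computable_if (c : nat -> bool) a b :
  computable (fun x => Nat.b2n (c x)) -> computable a -> computable b ->
  computable (fun x => if c x then a x else b x).
Proof.
  intros Hc Ha Hb; eapply computable_ext; [exact (computable_app3 ifz _ _ _ Hc Ha Hb)|].
  intro x; cbv beta; destruct (c x); reflexivity.
Qed.

Lemma computable_bool_if (c P Q : nat -> bool) :
  computable (fun x => Nat.b2n (c x)) -> computable (fun x => Nat.b2n (P x)) ->
  computable (fun x => Nat.b2n (Q x)) ->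
  computable (fun x => Nat.b2n (if c x then P x else Q x)).
Proof.
  intros Hc HP HQ; eapply computable_ext; [exact (computable_if c _ _ Hc HP HQ)|].
  intro x; cbv beta; destruct (c x); reflexivity.
Qed.

Lemma computable_andb (P Q : nat -> bool) :
  computable (fun x => Nat.b2n (P x)) -> computable (fun x => Nat.b2n (Q x)) ->
  computable (fun x => Nat.b2n (P x && Q x)).
Proof.
  intros; apply (computable_bool_if P Q (fun _ => false)); auto using computable_const.
Qed.

Lemma computable_orb (P Q : nat -> bool) :
  computable (fun x => Nat.b2n (P x)) -> computable (fun x => Nat.b2n (Q x)) ->
  computable (fun x => Nat.b2n (P x || Q x)).
Proof.
  intros; apply (computable_bool_if P (fun _ => true) Q); auto using computable_const.
Qed.

Ltac prove_computable :=
  match goal with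
  | |- computable (fun x => x) => exact computable_id
  | |- computable (fun _ => ?n) => exact (computable_const n)
  | |- computable (fun x => to_nat (@?a x, @?b x)) =>
      apply (computable_pair a b); prove_computable
  | |- computable (fun x => if @?c x then @?a x else @?b x) =>
      apply (computable_if c a b); prove_computable
  | |- computable (fun x => Nat.b2n (if @?c x then @?P x else @?Q x)) =>
      apply (computable_bool_if c P Q); prove_computable
  | |- computable (fun x => Nat.b2n (@?P x && @?Q x)) =>
      apply (computable_andb P Q); prove_computable
  | |- computable (fun x => Nat.b2n (@?P x || @?Q x)) =>
      apply (computable_orb P Q); prove_computable
  | |- computable (fun x => Nat.b2n (?P (@?a x) (@?b x))) =>
      apply (computable_papp2 P a b); prove_computable
  | |- computable (fun x => Nat.b2n (?P (@?a x))) =>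
      apply (computable_papp1 P a); prove_computable
  | |- computable (fun x => ?F (@?a x) (@?b x) (@?c x)) =>
      apply (computable_app3 F a b c); prove_computable
  | |- computable (fun x => ?F (@?a x) (@?b x)) =>
      apply (computable_app2 F a b); prove_computable
  | |- computable (fun x => ?F (@?a x)) =>
      apply (computable_app1 F a); prove_computable
  | |- computable ?f => exact (computable1 (f := f))
  end.

#[export] Instance computable1_succ : Computable1 S := computable_succ.
#[export] Instance computable1_unpair1 : Computable1 unpair1 := computable_unpair1.
#[export] Instance computable1_unpair2 : Computable1 unpair2 := computable_unpair2.

Lemma computable1_of_rec (F : nat -> nat) a g :
  computable g -> F 0 = a -> (forall n, F (S n) = g (to_nat (n, F n))) ->
  Computable1 F.
Proof.
  intros cg F0 FS; assert (Computable1 g) by exact cg.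
  assert (HF : computable (fun z => (fun (_ n : nat) => F n) (unpair1 z) (unpair2 z))).
  { apply (computable_prim_rec (fun _ n => F n) (fun _ => a) (fun z => g (unpair2 z)));
      [prove_computable|prove_computable|auto|].
    intros; simpl_unpair; auto. }
  unfold Computable1; eapply computable_ext.
  - exact (computable_comp _ (fun n => to_nat (0, n)) HF ltac:(prove_computable)).
  - intro; cbv beta; simpl_unpair; reflexivity.
Qed.

Lemma computable2_of_rec (F : nat -> nat -> nat) f g :
  computable f -> computable g ->
  (forall x, F x 0 = f x) ->
  (forall x n, F x (S n) = g (to_nat (x, to_nat (n, F x n)))) ->
  Computable2 F.
Proof. intros cf cg F0 FS; exact (computable_prim_rec F f g cf cg F0 FS). Qed.

Lemma computable_pred2_of (P : nat -> nat -> bool) (G : nat -> nat -> nat) :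
  Computable2 G -> (forall a b, Nat.b2n (P a b) = G a b) -> ComputablePred2 P.
Proof. intros HG E; eapply computable_ext; [exact HG|intro; cbv beta; rewrite E; auto]. Qed.

#[export] Instance computable_add : Computable2 Nat.add.
Proof.
  apply (computable2_of_rec _ (fun x => x) (fun z => S (unpair2 (unpair2 z))));
    [prove_computable|prove_computable|intros; lia|intros; simpl_unpair; lia].
Qed.

#[export] Instance computable_pred : Computable1 pred.
Proof.
  apply (computable1_of_rec _ 0 unpair1); [prove_computable|auto|].
  intros; simpl_unpair; auto.
Qed.

#[export] Instance computable_sub : Computable2 Nat.sub.
Proof.
  apply (computable2_of_rec _ (fun x => x) (fun z => pred (unpair2 (unpair2 z))));
    [prove_computable|prove_computable|intros; lia|intros; simpl_unpair; lia].
Qed.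

#[export] Instance computable_mul : Computable2 Nat.mul.
Proof.
  apply (computable2_of_rec _ (fun _ => 0) (fun z => unpair2 (unpair2 z) + unpair1 z));
    [prove_computable|prove_computable|intros; lia|intros; simpl_unpair; lia].
Qed.

#[export] Instance computable_max : Computable2 Nat.max.
Proof.
  unfold Computable2; eapply computable_ext.
  - apply (computable_app2 Nat.add unpair1 (fun z => unpair2 z - unpair1 z)); prove_computable.
  - intros; cbv beta; lia.
Qed.

#[export] Instance computable_eqb : ComputablePred2 Nat.eqb.
Proof.
  apply (computable_pred2_of _ (fun a b => ifz ((a - b) + (b - a)) 0 1));
    [unfold Computable2; prove_computable|].
  intros a b; destruct (Nat.eqb_spec a b), (a - b + (b - a)) eqn:E; cbn; lia.
Qed.

#[export] Instance computable_leb : ComputablePred2 Nat.leb.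
Proof.
  apply (computable_pred2_of _ (fun a b => ifz (a - b) 0 1));
    [unfold Computable2; prove_computable|].
  intros a b; destruct (Nat.leb_spec a b), (a - b) eqn:E; cbn; lia.
Qed.

#[export] Instance computable_odd : ComputablePred1 Nat.odd.
Proof.
  apply (computable1_of_rec (fun a => Nat.b2n (Nat.odd a)) 0
           (fun z => ifz (unpair2 z) 0 1)); [prove_computable|auto|].
  intros n; simpl_unpair; rewrite Nat.odd_succ, <- Nat.negb_odd.
  destruct (Nat.odd n); auto.
Qed.

#[export] Instance computable_div2 : Computable1 Nat.div2.
Proof.
  apply (computable1_of_rec _ 0 (fun z => unpair2 z + Nat.b2n (Nat.odd (unpair1 z))));
    [prove_computable|auto|].
  intros n; simpl_unpair.
  pose proof (Nat.div2_odd n) as En; pose proof (Nat.div2_odd (S n)) as ESn.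
  rewrite Nat.odd_succ, <- Nat.negb_odd in ESn; destruct (Nat.odd n); cbn in *; lia.
Qed.

Lemma testbit_odd_iter_div2 a n : Nat.testbit a n = Nat.odd (Nat.iter n Nat.div2 a).
Proof.
  revert a; induction n as [|n IH]; intros; [reflexivity|].
  cbn [Nat.testbit]; rewrite IH, Nat.iter_swap; reflexivity.
Qed.

#[export] Instance computable_testbit : ComputablePred2 Nat.testbit.
Proof.
  assert (H : Computable2 (fun a n => Nat.iter n Nat.div2 a)).
  { apply (computable2_of_rec _ (fun x => x) (fun z => Nat.div2 (unpair2 (unpair2 z))));
      [prove_computable|prove_computable|auto|intros; simpl_unpair; reflexivity]. }
  unfold ComputablePred2; eapply computable_ext.
  - exact (computable_papp1 Nat.odd _ H).
  - intro; cbv beta; rewrite testbit_odd_iter_div2; reflexivity.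
Qed.

#[export] Instance computable_pow2 : Computable1 (fun n => 2 ^ n).
Proof.
  apply (computable1_of_rec _ 1 (fun z => unpair2 z + unpair2 z)); [prove_computable|auto|].
  intros; simpl_unpair; cbn; lia.
Qed.

Fixpoint div_upto (x y n : nat) : nat :=
  match n with
  | 0 => 0
  | S m => if S m * y <=? x then S m else div_upto x y m
  end.

Lemma div_upto_spec x y n : y <> 0 -> div_upto x y n = Nat.min n (x / y).
Proof.
  intros Hy; induction n as [|n IH]; cbn [div_upto]; [reflexivity|].
  destruct (Nat.leb_spec (S n * y) x).
  - assert (S n <= x / y) by (apply Nat.div_le_lower_bound; nia); lia.
  - assert (x / y <= n).
    { destruct (Nat.le_gt_cases (x / y) n) as [|Hlt]; [assumption|].
      pose proof (Nat.Div0.mul_div_le x y).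
      assert (S n * y <= x / y * y) by (apply Nat.mul_le_mono_r; lia); nia. }
    lia.
Qed.

#[export] Instance computable_div_upto : Computable3 div_upto.
Proof.
  assert (H : Computable2 (fun w n => div_upto (unpair1 w) (unpair2 w) n)).
  { apply (computable2_of_rec _ (fun _ => 0)
      (fun z => if S (unpair1 (unpair2 z)) * unpair2 (unpair1 z) <=? unpair1 (unpair1 z)
                then S (unpair1 (unpair2 z)) else unpair2 (unpair2 z)));
      [prove_computable|prove_computable|auto|intros; simpl_unpair; reflexivity]. }
  unfold Computable3; eapply computable_ext.
  - apply (computable_app2 _ (fun z => to_nat (unpair1 z, unpair1 (unpair2 z)))
             (fun z => unpair2 (unpair2 z))); prove_computable.
  - intro; cbv beta; simpl_unpair; reflexivity.
Qed.

#[export] Instance computable_div : Computable2 Nat.div.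
Proof.
  unfold Computable2; eapply computable_ext.
  - apply (computable_if (fun z => unpair2 z =? 0) (fun _ => 0)
             (fun z => div_upto (unpair1 z) (unpair2 z) (unpair1 z)));
      prove_computable.
  - intro z; cbv beta; destruct (unpair2 z) as [|y] eqn:E; cbn [Nat.eqb].
    + destruct (unpair1 z); reflexivity.
    + rewrite div_upto_spec by lia.
      assert (unpair1 z / S y <= unpair1 z) by (apply Nat.Div0.div_le_upper_bound; nia); lia.
Qed.

Fixpoint bexists (P : nat -> nat -> bool) (x n : nat) : bool :=
  match n with 0 => false | S m => bexists P x m || P x m end.

Fixpoint bforall (P : nat -> nat -> bool) (x n : nat) : bool :=
  match n with 0 => true | S m => bforall P x m && P x m end.

(** [bsearch P x n] is [S k] for the least [k < n] with [P x k], and [0] if there is none. *)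
Fixpoint bsearch (P : nat -> nat -> bool) (x n : nat) : nat :=
  match n with
  | 0 => 0
  | S m => match bsearch P x m with 0 => if P x m then S m else 0 | r => r end
  end.

#[export] Instance computable_bexists P `{ComputablePred2 P} : ComputablePred2 (bexists P).
Proof.
  apply (computable_pred2_of _ (fun x n => Nat.b2n (bexists P x n))); [|reflexivity].
  apply (computable2_of_rec _ (fun _ => 0)
    (fun z => Nat.b2n (if unpair2 (unpair2 z) =? 0
                       then P (unpair1 z) (unpair1 (unpair2 z)) else true)));
    [prove_computable|prove_computable|reflexivity|].
  intros; simpl_unpair; cbn [bexists]; destruct (bexists P x n); reflexivity.
Qed.

#[export] Instance computable_bforall P `{ComputablePred2 P} : ComputablePred2 (bforall P).
Proof.
  apply (computable_pred2_of _ (fun x n => Nat.b2n (bforall P x n))); [|reflexivity].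
  apply (computable2_of_rec _ (fun _ => 1)
    (fun z => Nat.b2n (if unpair2 (unpair2 z) =? 0
                       then false else P (unpair1 z) (unpair1 (unpair2 z)))));
    [prove_computable|prove_computable|reflexivity|].
  intros; simpl_unpair; cbn [bforall]; destruct (bforall P x n); reflexivity.
Qed.

#[export] Instance computable_bsearch P `{ComputablePred2 P} : Computable2 (bsearch P).
Proof.
  apply (computable2_of_rec _ (fun _ => 0)
    (fun z => if unpair2 (unpair2 z) =? 0
              then (if P (unpair1 z) (unpair1 (unpair2 z)) then S (unpair1 (unpair2 z)) else 0)
              else unpair2 (unpair2 z)));
    [prove_computable|prove_computable|reflexivity|].
  intros; simpl_unpair; cbn [bsearch]; destruct (bsearch P x n); reflexivity.
Qed.

Lemma bexists_spec P x n : bexists P x n = true <-> exists k, k < n /\ P x k = true.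
Proof.
  induction n as [|n IH]; cbn [bexists].
  - split; [discriminate|intros [k [Hk _]]; lia].
  - rewrite orb_true_iff, IH; split.
    + intros [[k [Hk HP]]|HP]; eauto.
    + intros [k [Hk HP]]; destruct (Nat.eq_dec k n) as [->|]; auto.
      left; exists k; split; [lia|assumption].
Qed.

Lemma bforall_spec P x n : bforall P x n = true <-> forall k, k < n -> P x k = true.
Proof.
  induction n as [|n IH]; cbn [bforall].
  - split; [intros; lia|reflexivity].
  - rewrite andb_true_iff, IH; split.
    + intros [Hlt Hn] k Hk; destruct (Nat.eq_dec k n) as [->|]; auto; apply Hlt; lia.
    + intros H; split; auto.
Qed.

Lemma bsearch_some P x n k : bsearch P x n = S k -> k < n /\ P x k = true.
Proof.
  induction n as [|n IH]; cbn [bsearch]; [discriminate|].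
  destruct (bsearch P x n) eqn:E.
  - destruct (P x n) eqn:HP; intros H; [injection H as <-; auto|discriminate].
  - intros H; rewrite <- H in IH; destruct IH; auto.
Qed.

Lemma bsearch_none P x n k : bsearch P x n = 0 -> k < n -> P x k = false.
Proof.
  induction n as [|n IH]; cbn [bsearch]; [lia|].
  destruct (bsearch P x n) eqn:E; [|discriminate].
  destruct (P x n) eqn:HP; [discriminate|].
  intros _ Hk; destruct (Nat.eq_dec k n) as [->|]; auto; apply IH; auto; lia.
Qed.

(** * A universal enumeration of the graphs of all mu-recursive codes *)

Fixpoint code_index (c : rec_code) : nat :=
  match c with
  | RZero => to_nat (0, 0)
  | RSucc => to_nat (1, 0)
  | RId => to_nat (2, 0)
  | RFst => to_nat (3, 0)
  | RSnd => to_nat (4, 0)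
  | RPair f g => to_nat (5, to_nat (code_index f, code_index g))
  | RComp f g => to_nat (6, to_nat (code_index f, code_index g))
  | RPrimRec f g => to_nat (7, to_nat (code_index f, code_index g))
  | RMin f => to_nat (8, code_index f)
  end.

Definition triple (e x y : nat) : nat := to_nat (e, to_nat (x, y)).

#[export] Instance computable_triple : Computable3 triple.
Proof. unfold Computable3, triple; prove_computable. Qed.

(** A natural number [B] is read as a finite set of triples [(e, x, y)], meaning that
    the code with index [e] maps [x] to [y].  The rule below decides whether such a
    triple follows from [B] in one step, searching the intermediate values of
    compositions and primitive recursions and the positive values below a
    minimisation among the numbers below [s]. *)

Definition comp_witness (w z : nat) : bool :=
  let B := unpair1 w in let f := unpair1 (unpair2 w) in
  let g := unpair1 (unpair2 (unpair2 w)) in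
  let x := unpair1 (unpair2 (unpair2 (unpair2 w))) in
  let y := unpair2 (unpair2 (unpair2 (unpair2 w))) in
  Nat.testbit B (triple g x z) && Nat.testbit B (triple f z y).

Definition prec_witness (w r : nat) : bool :=
  let B := unpair1 w in let e := unpair1 (unpair2 w) in
  let g := unpair1 (unpair2 (unpair2 w)) in
  let x := unpair1 (unpair2 (unpair2 (unpair2 w))) in
  let n := unpair1 (unpair2 (unpair2 (unpair2 (unpair2 w)))) in
  let y := unpair2 (unpair2 (unpair2 (unpair2 (unpair2 w)))) in
  Nat.testbit B (triple e (to_nat (x, n)) r) &&
  Nat.testbit B (triple g (to_nat (x, to_nat (n, r))) y).

Definition min_witness (u v : nat) : bool :=
  let w := unpair1 u in let m := unpair2 u in
  let B := unpair1 w in let f := unpair1 (unpair2 w) in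
  let x := unpair1 (unpair2 (unpair2 w)) in
  Nat.testbit B (triple f (to_nat (x, m)) (S v)).

Definition min_positive (w m : nat) : bool :=
  bexists min_witness (to_nat (w, m)) (unpair2 (unpair2 (unpair2 w))).

#[export] Instance computable_comp_witness : ComputablePred2 comp_witness.
Proof. unfold ComputablePred2, comp_witness; cbv zeta; prove_computable. Qed.
#[export] Instance computable_prec_witness : ComputablePred2 prec_witness.
Proof. unfold ComputablePred2, prec_witness; cbv zeta; prove_computable. Qed.
#[export] Instance computable_min_witness : ComputablePred2 min_witness.
Proof. unfold ComputablePred2, min_witness; cbv zeta; prove_computable. Qed.
#[export] Instance computable_min_positive : ComputablePred2 min_positive.
Proof. unfold ComputablePred2, min_positive; prove_computable. Qed.

Definition graph_rule (w j : nat) : bool :=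
  let s := unpair1 w in let B := unpair2 w in
  let e := unpair1 j in let x := unpair1 (unpair2 j) in let y := unpair2 (unpair2 j) in
  let tag := unpair1 e in let f := unpair1 (unpair2 e) in let g := unpair2 (unpair2 e) in
  if tag =? 0 then y =? 0
  else if tag =? 1 then y =? S x
  else if tag =? 2 then y =? x
  else if tag =? 3 then y =? unpair1 x
  else if tag =? 4 then y =? unpair2 x
  else if tag =? 5 then
    Nat.testbit B (triple f x (unpair1 y)) && Nat.testbit B (triple g x (unpair2 y))
  else if tag =? 6 then
    bexists comp_witness (to_nat (B, to_nat (f, to_nat (g, to_nat (x, y))))) s
  else if tag =? 7 then
    if unpair2 x =? 0 then Nat.testbit B (triple f (unpair1 x) y)
    else bexists prec_witness
           (to_nat (B, to_nat (e, to_nat (g, to_nat (unpair1 x,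
              to_nat (pred (unpair2 x), y)))))) s
  else if tag =? 8 then
    Nat.testbit B (triple (unpair2 e) (to_nat (x, y)) 0) &&
    bforall min_positive (to_nat (B, to_nat (unpair2 e, to_nat (x, s)))) y
  else false.

#[export] Instance computable_graph_rule : ComputablePred2 graph_rule.
Proof. unfold ComputablePred2, graph_rule; cbv zeta; prove_computable. Qed.

Definition set_bit (a j : nat) : nat := if Nat.testbit a j then a else a + 2 ^ j.

(** [w] packs the stage [s] and the current set [B]; all triples [j < n] derivable
    from [B] are added. *)
Fixpoint add_derived (w n : nat) : nat :=
  match n with
  | 0 => unpair2 w
  | S j => if graph_rule w j then set_bit (add_derived w j) j else add_derived w j
  end.

#[export] Instance computable_add_derived : Computable2 add_derived.
Proof.
  apply (computable2_of_rec _ unpair2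
    (fun z => if graph_rule (unpair1 z) (unpair1 (unpair2 z))
              then (if Nat.testbit (unpair2 (unpair2 z)) (unpair1 (unpair2 z))
                    then unpair2 (unpair2 z)
                    else unpair2 (unpair2 z) + (fun n => 2 ^ n) (unpair1 (unpair2 z)))
              else unpair2 (unpair2 z)));
    [prove_computable|prove_computable|reflexivity|intros; simpl_unpair; reflexivity].
Qed.

Fixpoint graph_stage (s : nat) : nat :=
  match s with 0 => 0 | S s' => add_derived (to_nat (s', graph_stage s')) s' end.

#[export] Instance computable_graph_stage : Computable1 graph_stage.
Proof.
  apply (computable1_of_rec _ 0 (fun z => add_derived z (unpair1 z)));
    [prove_computable|reflexivity|intros; simpl_unpair; reflexivity].
Qed.

Lemma testbit_set_bit a j i : Nat.testbit (set_bit a j) i = Nat.testbit a i || (j =? i).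
Proof.
  unfold set_bit; destruct (Nat.testbit a j) eqn:Ej.
  - destruct (Nat.eqb_spec j i) as [<-|]; rewrite ?Ej, ?orb_false_r; reflexivity.
  - assert (Hdisj : Nat.land a (2 ^ j) = 0).
    { apply Nat.bits_inj; intro n.
      rewrite Nat.land_spec, Nat.bits_0, Nat.pow2_bits_eqb.
      destruct (Nat.eqb_spec j n) as [<-|]; rewrite ?Ej; auto using andb_false_r. }
    rewrite Nat.add_nocarry_lxor, Nat.lxor_spec, Nat.pow2_bits_eqb by exact Hdisj.
    destruct (Nat.eqb_spec j i) as [->|]; rewrite ?Ej; destruct (Nat.testbit a i); auto.
Qed.

Lemma testbit_add_derived w n i :
  Nat.testbit (add_derived w n) i = Nat.testbit (unpair2 w) i || ((i <? n) && graph_rule w i).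
Proof.
  induction n as [|n IH]; cbn [add_derived]; [rewrite orb_false_r; reflexivity|].
  destruct (graph_rule w n) eqn:R; rewrite ?testbit_set_bit, IH;
    destruct (Nat.ltb_spec i n), (Nat.ltb_spec i (S n)), (Nat.eqb_spec n i);
    subst; cbn; rewrite ?R, ?orb_true_r, ?orb_false_r; auto; lia.
Qed.

Lemma testbit_graph_stage_S s i :
  Nat.testbit (graph_stage (S s)) i =
  Nat.testbit (graph_stage s) i || ((i <? s) && graph_rule (to_nat (s, graph_stage s)) i).
Proof. cbn [graph_stage]; rewrite testbit_add_derived; simpl_unpair; reflexivity. Qed.

Lemma graph_stage_mono s s' i :
  s <= s' -> Nat.testbit (graph_stage s) i = true -> Nat.testbit (graph_stage s') i = true.
Proof. induction 1; auto; intros; rewrite testbit_graph_stage_S, IHle; auto. Qed.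

Lemma graph_stage_sound s c x y :
  Nat.testbit (graph_stage s) (triple (code_index c) x y) = true -> rec_eval c x y.
Proof.
  revert c x y; induction s as [|s IH]; intros c x y Hj.
  { cbn [graph_stage] in Hj; rewrite Nat.bits_0 in Hj; discriminate. }
  rewrite testbit_graph_stage_S in Hj; apply orb_true_iff in Hj as [Hj|Hj]; [eauto|].
  apply andb_true_iff in Hj as [_ Hj].
  unfold graph_rule, triple in Hj; simpl_unpair_in Hj.
  destruct c; cbn [code_index] in Hj; simpl_unpair_in Hj; cbn [Nat.eqb] in Hj.
  - apply Nat.eqb_eq in Hj as ->; constructor.
  - apply Nat.eqb_eq in Hj as ->; constructor.
  - apply Nat.eqb_eq in Hj as ->; constructor.
  - apply Nat.eqb_eq in Hj as ->; constructor.
  - apply Nat.eqb_eq in Hj as ->; constructor.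
  - apply andb_true_iff in Hj as [Hf Hg].
    rewrite <- (pair_unpair y); constructor; eauto.
  - apply bexists_spec in Hj as [z [_ Hz]].
    unfold comp_witness in Hz; simpl_unpair_in Hz; apply andb_true_iff in Hz as [Hg Hf].
    econstructor; eauto.
  - rewrite <- (pair_unpair x); destruct (unpair2 x) as [|n]; cbn [Nat.eqb pred] in Hj.
    + constructor; eauto.
    + apply bexists_spec in Hj as [r [_ Hr]].
      unfold prec_witness in Hr; simpl_unpair_in Hr; apply andb_true_iff in Hr as [Hn Hg].
      econstructor; [apply (IH (RPrimRec c1 c2))|]; eauto.
  - apply andb_true_iff in Hj as [H0 Hpos]; constructor; [eauto|].
    intros m Hm; apply bforall_spec with (k := m) in Hpos; [|exact Hm].
    unfold min_positive in Hpos; simpl_unpair_in Hpos.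
    apply bexists_spec in Hpos as [v [_ Hv]].
    unfold min_witness in Hv; simpl_unpair_in Hv; eauto.
Qed.

Definition eventually_enumerated (j : nat) : Prop :=
  exists s0, forall s, s0 <= s -> Nat.testbit (graph_stage s) j = true.

Lemma eventually_enumerated_of_rule j s :
  j < s -> graph_rule (to_nat (s, graph_stage s)) j = true -> eventually_enumerated j.
Proof.
  intros Hj Hr; exists (S s); intros s' Hs; apply (graph_stage_mono (S s)); auto.
  rewrite testbit_graph_stage_S, (proj2 (Nat.ltb_lt _ _) Hj), Hr; apply orb_true_r.
Qed.

Lemma eventually_uniform n (P : nat -> nat -> Prop) :
  (forall m, m < n -> exists K, forall s, K <= s -> P m s) ->
  exists K, forall m s, m < n -> K <= s -> P m s.
Proof.
  induction n as [|n IH]; intros H; [exists 0; intros; lia|].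
  destruct IH as [K1 HK1]; [intros; apply H; lia|].
  destruct (H n) as [K2 HK2]; [lia|].
  exists (Nat.max K1 K2); intros m s Hm Hs.
  destruct (Nat.eq_dec m n) as [->|]; [apply HK2|apply HK1]; lia.
Qed.

Lemma graph_stage_complete c x y :
  rec_eval c x y -> eventually_enumerated (triple (code_index c) x y).
Proof.
  revert c x y; fix IH 4; intros c x y Hev.
  destruct Hev as [x|x|x|n|n|f g x a b Hf Hg|f g x y z Hg Hf|f g x r Hf|f g x n r r' Hrec Hg
                  |f x n Hf Hpos].
  all: match goal with |- eventually_enumerated ?j => set (t := j) end.
  all: unfold triple in *.
  - apply (eventually_enumerated_of_rule _ (S t)); [lia|].
    unfold graph_rule, t; cbn [code_index]; simpl_unpair; reflexivity.
  - apply (eventually_enumerated_of_rule _ (S t)); [lia|].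
    unfold graph_rule, t; cbn [code_index]; simpl_unpair; apply Nat.eqb_refl.
  - apply (eventually_enumerated_of_rule _ (S t)); [lia|].
    unfold graph_rule, t; cbn [code_index]; simpl_unpair; apply Nat.eqb_refl.
  - apply (eventually_enumerated_of_rule _ (S t)); [lia|].
    unfold graph_rule, t; cbn [code_index]; simpl_unpair; apply Nat.eqb_refl.
  - apply (eventually_enumerated_of_rule _ (S t)); [lia|].
    unfold graph_rule, t; cbn [code_index]; simpl_unpair; apply Nat.eqb_refl.
  - destruct (IH _ _ _ Hf) as [s1 H1], (IH _ _ _ Hg) as [s2 H2].
    set (s := S (Nat.max t (Nat.max s1 s2))).
    apply (eventually_enumerated_of_rule _ s); [lia|].
    unfold graph_rule, t, triple; cbn [code_index]; simpl_unpair; cbn [Nat.eqb].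
    rewrite H1, H2 by lia; reflexivity.
  - destruct (IH _ _ _ Hf) as [s1 H1], (IH _ _ _ Hg) as [s2 H2].
    set (s := S (Nat.max (Nat.max t y) (Nat.max s1 s2))).
    apply (eventually_enumerated_of_rule _ s); [lia|].
    unfold graph_rule, t, triple; cbn [code_index]; simpl_unpair; cbn [Nat.eqb].
    apply bexists_spec; exists y; split; [lia|].
    unfold comp_witness, triple; simpl_unpair; rewrite H1, H2 by lia; reflexivity.
  - destruct (IH _ _ _ Hf) as [s1 H1].
    set (s := S (Nat.max t s1)).
    apply (eventually_enumerated_of_rule _ s); [lia|].
    unfold graph_rule, t, triple; cbn [code_index]; simpl_unpair; cbn [Nat.eqb].
    rewrite H1 by lia; reflexivity.
  - destruct (IH _ _ _ Hrec) as [s1 H1], (IH _ _ _ Hg) as [s2 H2].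
    set (s := S (Nat.max (Nat.max t r) (Nat.max s1 s2))).
    apply (eventually_enumerated_of_rule _ s); [lia|].
    unfold graph_rule, t, triple; cbn [code_index]; simpl_unpair; cbn [Nat.eqb pred].
    apply bexists_spec; exists r; split; [lia|].
    unfold prec_witness, triple; simpl_unpair; cbn [code_index] in H1.
    rewrite H1, H2 by lia; reflexivity.
  - destruct (IH _ _ _ Hf) as [s1 H1].
    destruct (eventually_uniform n (fun m s => exists v, v < s /\
        Nat.testbit (graph_stage s) (to_nat (code_index f, to_nat (to_nat (x, m), S v))) = true))
      as [K HK].
    { intros m Hm; destruct (Hpos m Hm) as [v Hv]; apply IH in Hv as [s2 H2].
      exists (Nat.max s2 (S v)); intros s Hs; exists v; split; [lia|apply H2; lia]. }
    set (s := S (Nat.max t (Nat.max s1 K))).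
    apply (eventually_enumerated_of_rule _ s); [lia|].
    unfold graph_rule, t, triple; cbn [code_index]; simpl_unpair; cbn [Nat.eqb].
    rewrite H1 by lia; cbn [andb].
    apply bforall_spec; intros m Hm; unfold min_positive; simpl_unpair.
    destruct (HK m s Hm) as [v [Hv Hbit]]; [lia|].
    apply bexists_spec; exists v; split; [exact Hv|].
    unfold min_witness, triple; simpl_unpair; exact Hbit.
Qed.

Definition rec_eval_cases (c : rec_code) (x y : nat) : Prop :=
  match c with
  | RZero => y = 0
  | RSucc => y = S x
  | RId => y = x
  | RFst => y = fst (of_nat x)
  | RSnd => y = snd (of_nat x)
  | RPair f g => exists a b, y = to_nat (a, b) /\ rec_eval f x a /\ rec_eval g x b
  | RComp f g => exists z, rec_eval g x z /\ rec_eval f z y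
  | RPrimRec f g =>
      (exists x0, x = to_nat (x0, 0) /\ rec_eval f x0 y) \/
      (exists x0 n r, x = to_nat (x0, S n) /\ rec_eval (RPrimRec f g) (to_nat (x0, n)) r /\
                      rec_eval g (to_nat (x0, to_nat (n, r))) y)
  | RMin f => rec_eval f (to_nat (x, y)) 0 /\
              forall m, m < y -> exists v, rec_eval f (to_nat (x, m)) (S v)
  end.

Lemma rec_eval_inv c x y : rec_eval c x y -> rec_eval_cases c x y.
Proof. destruct 1; cbn; eauto 10. Qed.

Lemma rec_eval_functional c x y y' : rec_eval c x y -> rec_eval c x y' -> y = y'.
Proof.
  intros H; revert y'; revert c x y H; fix IH 4; intros c x y H y' H'.
  apply rec_eval_inv in H'.
  destruct H as [x|x|x|n|n|f g x a b Hf Hg|f g x y z Hg Hf|f g x r Hf|f g x n r r' Hrec Hg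
                |f x n Hf Hpos]; cbn [rec_eval_cases] in H'.
  1-5: congruence.
  - destruct H' as [a' [b' [-> [Hf' Hg']]]].
    rewrite (IH _ _ _ Hf _ Hf'), (IH _ _ _ Hg _ Hg'); reflexivity.
  - destruct H' as [z' [Hg' Hf']].
    rewrite (IH _ _ _ Hg _ Hg') in Hf; exact (IH _ _ _ Hf _ Hf').
  - destruct H' as [[x0 [E Hf']]|[x0 [n [r0 [E _]]]]]; apply to_nat_inj in E.
    + injection E as <-; exact (IH _ _ _ Hf _ Hf').
    + discriminate.
  - destruct H' as [[x0 [E _]]|[x0 [n' [r0 [E [Hrec' Hg']]]]]]; apply to_nat_inj in E.
    + discriminate.
    + injection E as <- <-; rewrite (IH _ _ _ Hrec _ Hrec') in Hg.
      exact (IH _ _ _ Hg _ Hg').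
  - destruct H' as [Hf' Hpos'].
    destruct (Nat.lt_trichotomy n y') as [Hlt|[->|Hlt]]; [|reflexivity|].
    + destruct (Hpos' n Hlt) as [v Hv]; specialize (IH _ _ _ Hf _ Hv); discriminate.
    + destruct (Hpos y' Hlt) as [v Hv]; specialize (IH _ _ _ Hv _ Hf'); discriminate.
Qed.

(** [output_bit u y] tests, for [u = <<e, x>, B>], whether [(e, x, y)] is in [B]. *)
Definition output_bit (u y : nat) : bool :=
  Nat.testbit (unpair2 u) (triple (unpair1 (unpair1 u)) (unpair2 (unpair1 u)) y).

#[export] Instance computable_output_bit : ComputablePred2 output_bit.
Proof. unfold ComputablePred2, output_bit; prove_computable. Qed.

(** [run_stage <e, x> s] is [S y] once an output [y < s] of the code with index [e]
    on input [x] has been enumerated by stage [s], and [0] before. *)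
Fixpoint run_stage (w s : nat) : nat :=
  match s with
  | 0 => 0
  | S s' => if run_stage w s' =? 0
            then bsearch output_bit (to_nat (w, graph_stage (S s'))) (S s')
            else run_stage w s'
  end.

#[export] Instance computable_run_stage : Computable2 run_stage.
Proof.
  apply (computable2_of_rec _ (fun _ => 0)
    (fun z => if unpair2 (unpair2 z) =? 0
              then bsearch output_bit (to_nat (unpair1 z, graph_stage (S (unpair1 (unpair2 z)))))
                           (S (unpair1 (unpair2 z)))
              else unpair2 (unpair2 z)));
    [prove_computable|prove_computable|reflexivity|intros; simpl_unpair; reflexivity].
Qed.

Lemma run_stage_stable w s s' : s <= s' -> run_stage w s <> 0 -> run_stage w s' = run_stage w s.
Proof.
  induction 1 as [|s' _ IH]; [reflexivity|]; intros Hn; cbn [run_stage].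
  rewrite IH by exact Hn; destruct (Nat.eqb_spec (run_stage w s) 0); tauto.
Qed.

Lemma run_stage_sound e x s y :
  run_stage (to_nat (e, x)) s = S y -> exists s', Nat.testbit (graph_stage s') (triple e x y) = true.
Proof.
  induction s as [|s IH]; cbn [run_stage]; [discriminate|].
  destruct (run_stage (to_nat (e, x)) s =? 0); [|exact IH].
  intros Hfound; apply bsearch_some in Hfound as [_ Hbit].
  unfold output_bit in Hbit; simpl_unpair_in Hbit; eauto.
Qed.

Lemma run_stage_found e x s y :
  y < s -> Nat.testbit (graph_stage s) (triple e x y) = true -> run_stage (to_nat (e, x)) s <> 0.
Proof.
  destruct s as [|s]; [lia|]; intros Hy Hbit; cbn [run_stage].
  destruct (Nat.eqb_spec (run_stage (to_nat (e, x)) s) 0); [|assumption].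
  intros Hnone; apply (bsearch_none _ _ _ y) in Hnone; [|exact Hy].
  unfold output_bit in Hnone; simpl_unpair_in Hnone; congruence.
Qed.

Lemma run_stage_correct c x y :
  rec_eval c x y -> exists s0, forall s, s0 <= s -> run_stage (to_nat (code_index c, x)) s = S y.
Proof.
  intros Hev; destruct (graph_stage_complete _ _ _ Hev) as [s0 Hs0].
  set (s1 := Nat.max s0 (S y)).
  assert (Hrun : run_stage (to_nat (code_index c, x)) s1 <> 0)
    by (apply (run_stage_found _ _ _ y); [lia|apply Hs0; lia]).
  destruct (run_stage (to_nat (code_index c, x)) s1) as [|y'] eqn:E; [contradiction|].
  destruct (run_stage_sound _ _ _ _ E) as [s' Hs'].
  rewrite <- (rec_eval_functional _ _ _ _ Hev (graph_stage_sound _ _ _ _ Hs')) in E.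
  exists s1; intros s Hs; rewrite (run_stage_stable _ s1 s); [exact E|exact Hs|].
  rewrite E; discriminate.
Qed.

Definition nat_qcode (m : nat) : nat := to_nat (to_nat (0, m), 0).

(** The integer part of [max 0 (qR n)]. *)
Definition qcode_pos_floor (n : nat) : nat :=
  if unpair1 (unpair1 n) =? 0 then unpair2 (unpair1 n) / S (unpair2 n) else 0.

#[export] Instance computable_qcode_pos_floor : Computable1 qcode_pos_floor.
Proof. unfold Computable1, qcode_pos_floor; prove_computable. Qed.

Lemma qR_unfold n :
  qR n = ((if unpair1 (unpair1 n) =? 0 then INR (unpair2 (unpair1 n))
           else - INR (unpair2 (unpair1 n))) / INR (S (unpair2 n)))%R.
Proof.
  unfold qR, qdec, unpair1, unpair2, zdec; destruct (of_nat n) as [a b]; cbn [fst snd].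
  destruct (of_nat a) as [[|s] m]; cbn [fst snd Nat.eqb]; unfold Q2R; cbn [Qnum Qden].
  all: rewrite Zpos_P_of_succ_nat, <- Nat2Z.inj_succ, <- INR_IZR_INZ.
  - rewrite <- INR_IZR_INZ; reflexivity.
  - rewrite opp_IZR, <- INR_IZR_INZ; reflexivity.
Qed.

Lemma qR_nat_qcode m : qR (nat_qcode m) = INR m.
Proof.
  rewrite qR_unfold; unfold nat_qcode; simpl_unpair; cbn [Nat.eqb].
  rewrite INR_1; field.
Qed.

Lemma qcode_pos_floor_bounds n :
  (INR (qcode_pos_floor n) <= Rmax 0 (qR n) /\ qR n < INR (qcode_pos_floor n) + 1)%R.
Proof.
  rewrite qR_unfold; unfold qcode_pos_floor.
  set (m := unpair2 (unpair1 n)); set (b := unpair2 n).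
  assert (Hb : (0 < INR (S b))%R) by (apply lt_0_INR; lia).
  destruct (unpair1 (unpair1 n) =? 0).
  - pose proof (Nat.div_mod m (S b) ltac:(lia)) as Hdiv.
    pose proof (Nat.mod_upper_bound m (S b) ltac:(lia)) as Hmod.
    assert (E : INR m = (INR (S b) * INR (m / S b) + INR (m mod S b))%R)
      by (rewrite Hdiv at 1; rewrite plus_INR, mult_INR; reflexivity).
    assert (Hr : (INR (m mod S b) < INR (S b))%R) by (apply lt_INR; exact Hmod).
    pose proof (pos_INR (m mod S b)).
    split.
    + apply Rle_trans with (INR m / INR (S b))%R; [|apply Rmax_r].
      apply Rmult_le_reg_r with (INR (S b)); [exact Hb|].
      unfold Rdiv; rewrite Rmult_assoc, Rinv_l by lra; lra.
    + apply Rmult_lt_reg_r with (INR (S b)); [exact Hb|].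
      unfold Rdiv; rewrite Rmult_assoc, Rinv_l by lra; nra.
  - pose proof (pos_INR m); rewrite INR_0; split; [apply Rmax_l|].
    apply Rmult_lt_reg_r with (INR (S b)); [exact Hb|].
    unfold Rdiv; rewrite Rmult_assoc, Rinv_l by lra; lra.
Qed.

Lemma qcode_pos_floor_mono n n' : (qR n <= qR n')%R -> qcode_pos_floor n <= qcode_pos_floor n'.
Proof.
  intros Hle; destruct (Nat.le_gt_cases (qcode_pos_floor n) (qcode_pos_floor n')) as [|Hgt];
    [assumption|exfalso].
  destruct (qcode_pos_floor_bounds n) as [Hn _], (qcode_pos_floor_bounds n') as [_ Hn'].
  assert (INR (qcode_pos_floor n') + 1 <= INR (qcode_pos_floor n))%R
    by (rewrite <- S_INR; apply le_INR; lia).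
  assert (1 <= INR (qcode_pos_floor n))%R by (rewrite <- INR_1; apply le_INR; lia).
  unfold Rmax in Hn; destruct (Rle_dec 0 (qR n)); lra.
Qed.

Lemma qcode_pos_floor_bounded (a : nat -> nat) L :
  Un_growing (fun s => qR (a s)) -> Un_cv (fun s => qR (a s)) L ->
  exists K, forall s, qcode_pos_floor (a s) <= K.
Proof.
  intros Hgrow Hcv; destruct (INR_archimed 1 (Rmax 0 L)) as [K HK]; [lra|].
  exists K; intros s; apply INR_le.
  destruct (qcode_pos_floor_bounds (a s)) as [Hfl _].
  pose proof (growing_ineq _ _ Hgrow Hcv s) as Hle; cbv beta in Hle.
  rewrite Rmult_1_r in HK; unfold Rmax in *.
  destruct (Rle_dec 0 (qR (a s))), (Rle_dec 0 L); lra.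
Qed.

Lemma nondecreasing_le (r : nat -> nat) :
  (forall s, r s <= r (S s)) -> forall s t, s <= t -> r s <= r t.
Proof. intros Hr s t Hst; induction Hst; [reflexivity|eapply Nat.le_trans; eauto]. Qed.

Lemma nondecreasing_bounded_stabilizes (r : nat -> nat) K :
  (forall s, r s <= r (S s)) -> (forall s, r s <= K) ->
  exists N, forall s, N <= s -> r s = r N.
Proof.
  intros Hr HK; assert (Hgap : forall s, r s <= r 0 + (K - r 0)) by (intros s; specialize (HK s); lia).
  remember (K - r 0) as D eqn:HD; clear HD HK; revert r Hr Hgap.
  induction D as [|D IH]; intros r Hr Hgap.
  - exists 0; intros s _; pose proof (nondecreasing_le r Hr 0 s ltac:(lia)); specialize (Hgap s); lia.
  - destruct (classic (forall s, r s = r 0)) as [Hconst|Hjump]; [exists 0; auto|].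
    apply not_all_ex_not in Hjump as [s Hs].
    pose proof (nondecreasing_le r Hr 0 s ltac:(lia)).
    destruct (IH (fun t => r (s + t))) as [N HN].
    + intros t; rewrite Nat.add_succ_r; apply Hr.
    + intros t; rewrite Nat.add_0_r; specialize (Hgap (s + t)); lia.
    + exists (s + N); intros t Ht; specialize (HN (t - s) ltac:(lia)).
      replace (s + (t - s)) with t in HN by lia; exact HN.
Qed.

Open Scope R_scope.

(** * The ultrametric spaces of pairs *)

(** The points [2e] and [2e+1] form the [e]-th pair, of radius [r e]. *)
Definition pair_ultrametric (r : nat -> nat) (x y : nat) : R :=
  if (x =? y)%nat then 0 else INR (Nat.max (r (Nat.div2 x)) (r (Nat.div2 y))).

Section PairUltrametric.

Variable r : nat -> nat.
Hypothesis r_pos : forall e, (1 <= r e)%nat.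

Lemma pair_ultrametric_refl x : pair_ultrametric r x x = 0.
Proof. unfold pair_ultrametric; rewrite Nat.eqb_refl; reflexivity. Qed.

Lemma pair_ultrametric_ge1 x y : x <> y -> 1 <= pair_ultrametric r x y.
Proof.
  intros Hxy; unfold pair_ultrametric; rewrite (proj2 (Nat.eqb_neq _ _) Hxy).
  rewrite <- INR_1; apply le_INR; specialize (r_pos (Nat.div2 x)); lia.
Qed.

Lemma pair_ultrametric_pair e : pair_ultrametric r (2 * e) (S (2 * e)) = INR (r e).
Proof.
  unfold pair_ultrametric.
  rewrite (proj2 (Nat.eqb_neq (2 * e) (S (2 * e))) ltac:(lia)).
  rewrite Nat.div2_double, Nat.div2_succ_double, Nat.max_id; reflexivity.
Qed.

Lemma pair_ultrametric_ultra : is_ultrametric (pair_ultrametric r).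
Proof.
  intros x y z; unfold pair_ultrametric.
  destruct (Nat.eqb_spec x z) as [->|Hxz].
  - destruct (z =? y)%nat; [apply Rmax_l|].
    apply Rle_trans with (2 := Rmax_l _ _); apply pos_INR.
  - destruct (Nat.eqb_spec x y) as [->|]; [rewrite (proj2 (Nat.eqb_neq _ _) Hxz); apply Rmax_r|].
    destruct (Nat.eqb_spec y z) as [->|]; [apply Rmax_l|].
    unfold Rmax; destruct (Rle_dec _ _) as [Hle|Hgt]; apply le_INR.
    + apply INR_le in Hle; lia.
    + apply Rnot_le_lt, INR_lt in Hgt; lia.
Qed.

Lemma pair_ultrametric_metric : is_metric (pair_ultrametric r).
Proof.
  split; [|split].
  - intros x y; split; [|intros ->; apply pair_ultrametric_refl].
    intros H; destruct (Nat.eq_dec x y) as [|Hxy]; [assumption|].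
    pose proof (pair_ultrametric_ge1 x y Hxy); lra.
  - intros x y; unfold pair_ultrametric; rewrite Nat.eqb_sym, Nat.max_comm; reflexivity.
  - intros x y z; pose proof (pair_ultrametric_ultra x y z).
    assert (Hnonneg : forall a b, 0 <= pair_ultrametric r a b).
    { intros a b; unfold pair_ultrametric; destruct (a =? b)%nat; [lra|apply pos_INR]. }
    pose proof (Hnonneg x y); pose proof (Hnonneg y z).
    unfold Rmax in *; destruct (Rle_dec _ _); lra.
Qed.

(** All nonzero distances are at least 1, so Cauchy sequences are eventually constant. *)
Lemma pair_ultrametric_complete : complete (pair_ultrametric r).
Proof.
  intros u Hu; destruct (Hu (1 / 2)) as [N HN]; [lra|].
  exists (u N); intros eps Heps; exists N; intros n Hn.
  specialize (HN n N Hn (le_n N)).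
  destruct (Nat.eq_dec (u n) (u N)) as [->|Hne]; [rewrite pair_ultrametric_refl; lra|].
  pose proof (pair_ultrametric_ge1 _ _ Hne); lra.
Qed.

Lemma pair_ultrametric_dense : dense_seq (pair_ultrametric r) (fun k => k).
Proof. intros x eps Heps; exists x; rewrite pair_ultrametric_refl; lra. Qed.

End PairUltrametric.

Definition pair_ultrametric_approx (rs : nat -> nat -> nat) (z : nat) : nat :=
  let i := unpair1 z in let k := unpair1 (unpair2 z) in let s := unpair2 (unpair2 z) in
  nat_qcode (if (i =? k)%nat then 0 else Nat.max (rs (Nat.div2 i) s) (rs (Nat.div2 k) s)).

Lemma pair_ultrametric_left_ce (rs : nat -> nat -> nat) (r : nat -> nat) :
  Computable2 rs -> (forall e s, rs e s <= rs e (S s))%nat ->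
  (forall e, exists N, forall s, (N <= s)%nat -> rs e s = r e) ->
  left_ce_uniform (pair_ultrametric r) (fun k => k).
Proof.
  intros Hcomp Hmono Hlim; exists (pair_ultrametric_approx rs); split.
  { unfold pair_ultrametric_approx, nat_qcode; cbv zeta; prove_computable. }
  intros i k.
  assert (Happrox : forall s, qR (pair_ultrametric_approx rs (to_nat (i, to_nat (k, s)))) =
    INR (if (i =? k)%nat then 0 else Nat.max (rs (Nat.div2 i) s) (rs (Nat.div2 k) s))).
  { intros s; unfold pair_ultrametric_approx; simpl_unpair; apply qR_nat_qcode. }
  split.
  - intros s; rewrite !Happrox; apply le_INR; destruct (i =? k)%nat; [lia|].
    pose proof (Hmono (Nat.div2 i) s); pose proof (Hmono (Nat.div2 k) s); lia.
  - destruct (Hlim (Nat.div2 i)) as [N1 H1], (Hlim (Nat.div2 k)) as [N2 H2].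
    intros eps Heps; exists (Nat.max N1 N2); intros n Hn.
    rewrite Happrox; unfold pair_ultrametric; rewrite H1, H2 by lia.
    unfold Rdist; destruct (i =? k)%nat; rewrite ?INR_0, Rminus_diag, Rabs_R0; exact Heps.
Qed.

Open Scope nat_scope.

(** * The diagonal radii *)

(** Stage [s] of the radius of the [e]-th pair: once the code with index [e] has
    output the first terms [u], [v] of the names of the images of [2e] and [2e+1], it
    follows the stage-[s] lower bound [g <u, <v, s>>] for the distance of [p u] and [p v]. *)
Definition diagonal_radius (g : nat -> nat) (e s : nat) : nat :=
  let u := run_stage (to_nat (e, to_nat (2 * e, 0))) s in
  let v := run_stage (to_nat (e, to_nat (S (2 * e), 0))) s in
  if (u =? 0) || (v =? 0) then 1
  else 4 + qcode_pos_floor (g (to_nat (pred u, to_nat (pred v, s)))).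

Section DiagonalRadius.

Variable g : nat -> nat.
Hypothesis g_mono : forall i k s,
  (qR (g (to_nat (i, to_nat (k, s)))) <= qR (g (to_nat (i, to_nat (k, S s)))))%R.

Lemma diagonal_radius_ge1 e s : 1 <= diagonal_radius g e s.
Proof. unfold diagonal_radius; cbv zeta; destruct (_ || _); lia. Qed.

Lemma diagonal_radius_mono e s : diagonal_radius g e s <= diagonal_radius g e (S s).
Proof.
  unfold diagonal_radius at 1; cbv zeta.
  set (w1 := to_nat (e, to_nat (2 * e, 0))); set (w2 := to_nat (e, to_nat (S (2 * e), 0))).
  destruct (Nat.eqb_spec (run_stage w1 s) 0) as [|N1]; [apply diagonal_radius_ge1|].
  destruct (Nat.eqb_spec (run_stage w2 s) 0) as [|N2]; [apply diagonal_radius_ge1|].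
  unfold diagonal_radius; cbv zeta; fold w1 w2.
  rewrite (run_stage_stable w1 s (S s)), (run_stage_stable w2 s (S s)) by (auto; lia).
  rewrite (proj2 (Nat.eqb_neq _ _) N1), (proj2 (Nat.eqb_neq _ _) N2); cbn [orb].
  apply (proj1 (Nat.add_le_mono_l _ _ 4)), qcode_pos_floor_mono, g_mono.
Qed.

Lemma diagonal_radius_stabilizes
  (g_bounded : forall i k, exists K, forall s, qcode_pos_floor (g (to_nat (i, to_nat (k, s)))) <= K)
  e : exists N, forall s, N <= s -> diagonal_radius g e s = diagonal_radius g e N.
Proof.
  set (w1 := to_nat (e, to_nat (2 * e, 0))); set (w2 := to_nat (e, to_nat (S (2 * e), 0))).
  assert (Hbound : exists K, forall s, diagonal_radius g e s <= K).
  { destruct (classic (exists s1, run_stage w1 s1 <> 0 /\ run_stage w2 s1 <> 0))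
      as [[s1 [N1 N2]]|Hnever].
    - destruct (g_bounded (pred (run_stage w1 s1)) (pred (run_stage w2 s1))) as [K HK].
      exists (4 + K); intros s.
      apply Nat.le_trans with (diagonal_radius g e (Nat.max s s1)).
      { apply nondecreasing_le; [apply diagonal_radius_mono|lia]. }
      unfold diagonal_radius; cbv zeta; fold w1 w2.
      rewrite (run_stage_stable w1 s1), (run_stage_stable w2 s1) by (auto; lia).
      rewrite (proj2 (Nat.eqb_neq _ _) N1), (proj2 (Nat.eqb_neq _ _) N2); cbn [orb].
      specialize (HK (Nat.max s s1)); lia.
    - exists 1; intros s; unfold diagonal_radius; cbv zeta; fold w1 w2.
      destruct (Nat.eqb_spec (run_stage w1 s) 0), (Nat.eqb_spec (run_stage w2 s) 0);
        cbn [orb]; [lia..|exfalso; eauto]. }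
  destruct Hbound as [K HK].
  exact (nondecreasing_bounded_stabilizes _ K (diagonal_radius_mono e) HK).
Qed.

(** The radius outgrows the distance of [p u] and [p v] by more than 2, because
    the integer part of a lower bound within [1/2] of [L] exceeds [L - 3/2]. *)
Lemma diagonal_radius_large c h r L :
  (forall x, rec_eval c x (h x)) ->
  (forall e, exists N, forall s, N <= s -> diagonal_radius g e s = r e) ->
  let e := code_index c in
  Un_cv (fun s => qR (g (to_nat (h (to_nat (2 * e, 0)), to_nat (h (to_nat (S (2 * e), 0)), s))))) L ->
  (L + 2 < INR (r e))%R.
Proof.
  intros Hh Hlim e Hcv.
  set (u := h (to_nat (2 * e, 0))) in *; set (v := h (to_nat (S (2 * e), 0))) in *.
  destruct (run_stage_correct c _ _ (Hh (to_nat (2 * e, 0)))) as [s1 Hu].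
  destruct (run_stage_correct c _ _ (Hh (to_nat (S (2 * e), 0)))) as [s2 Hv].
  destruct (Hlim e) as [s3 Hr].
  destruct (Hcv (1 / 2)%R) as [s4 Hclose]; [lra|].
  set (s := Nat.max (Nat.max s1 s2) (Nat.max s3 s4)).
  specialize (Hclose s ltac:(lia)); cbv beta in Hclose.
  rewrite <- (Hr s) by lia; unfold diagonal_radius; cbv zeta; fold e.
  fold e in Hu, Hv; rewrite (Hu s), (Hv s) by lia; cbn [Nat.eqb orb pred]; fold u v.
  destruct (qcode_pos_floor_bounds (g (to_nat (u, to_nat (v, s))))) as [_ Hfloor].
  unfold Rdist in Hclose; apply Rabs_def2 in Hclose.
  rewrite plus_INR; replace (INR 4) with 4%R by (cbn; lra); lra.
Qed.

End DiagonalRadius.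

Lemma diagonal_radius_computable g : computable g -> Computable2 (diagonal_radius g).
Proof.
  intros Hg; assert (Computable1 g) by exact Hg.
  unfold Computable2, diagonal_radius; cbv zeta; prove_computable.
Qed.

Lemma eventual_values (rs : nat -> nat -> nat) :
  (forall e, exists N, forall s, N <= s -> rs e s = rs e N) ->
  exists r, forall e, exists N, forall s, N <= s -> rs e s = r e.
Proof.
  intros Hstab.
  exists (fun e => rs e (proj1_sig (constructive_indefinite_description _ (Hstab e)))).
  intros e; destruct (constructive_indefinite_description _ (Hstab e)) as [N HN]; eauto.
Qed.

Lemma cauchy_name_head_close {M : Type} (d : M -> M -> R) p g x :
  (forall x y z, (d x z <= d x y + d y z)%R) -> cauchy_name_for d p g x ->
  (d (p (g 0%nat)) x <= 1)%R.
Proof.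
  intros Htri [Hname Hcv]; apply Rnot_lt_le; intros Hfar.
  destruct (Hcv (d (p (g 0%nat)) x - 1)%R) as [N HN]; [lra|].
  specialize (HN N (le_n N)); pose proof (Hname 0 N (Nat.le_0_l N)) as H0.
  rewrite pow_O, Rinv_1 in H0; pose proof (Htri (p (g 0%nat)) (p (g N)) x); lra.
Qed.

Theorem mainTheorem15 :
  forall (M : Type) (d : M -> M -> R) (p : nat -> M),
    left_ce_metric_space d p ->
    exists (A : Type) (dA : A -> A -> R) (q : nat -> A),
      left_ce_metric_space dA q /\ is_ultrametric dA /\
      ~ (exists f : A -> M,
           isometric_embedding dA d f /\ computable_map q d p f).
Proof.
  intros M d p [[[_ [Hsym Htri]] _] [g [Hg Happrox]]].
  assert (Hmono : forall i k s, (qR (g (to_nat (i, to_nat (k, s)))) <=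
                                 qR (g (to_nat (i, to_nat (k, S s)))))%R)
    by (intros i k; apply Happrox).
  assert (Hbounded : forall i k, exists K, forall s, qcode_pos_floor (g (to_nat (i, to_nat (k, s)))) <= K)
    by (intros i k; exact (qcode_pos_floor_bounded _ _ (proj1 (Happrox i k)) (proj2 (Happrox i k)))).
  destruct (eventual_values _ (diagonal_radius_stabilizes g Hmono Hbounded)) as [r Hr].
  assert (Hr1 : forall e, 1 <= r e).
  { intros e; destruct (Hr e) as [N HN]; rewrite <- (HN N (le_n N)); apply diagonal_radius_ge1. }
  exists nat, (pair_ultrametric r), (fun k => k); split; [|split].
  - split; [split; [|split]|].
    + apply pair_ultrametric_metric, Hr1.
    + apply pair_ultrametric_complete, Hr1.
    + apply pair_ultrametric_dense.
    + apply (pair_ultrametric_left_ce (diagonal_radius g));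
        [apply diagonal_radius_computable, Hg|apply diagonal_radius_mono, Hmono|exact Hr].
  - apply pair_ultrametric_ultra.
  - intros [f [Hiso [h [[c Hc] Hnames]]]].
    set (e := code_index c).
    set (u := h (to_nat (2 * e, 0))); set (v := h (to_nat (S (2 * e), 0))).
    pose proof (diagonal_radius_large g c h r _ Hc Hr (proj2 (Happrox u v))) as Hlarge.
    pose proof (cauchy_name_head_close d p _ _ Htri (Hnames (2 * e))) as Hu.
    pose proof (cauchy_name_head_close d p _ _ Htri (Hnames (S (2 * e)))) as Hv.
    pose proof (Hiso (2 * e) (S (2 * e))) as Hpair; rewrite pair_ultrametric_pair in Hpair.
    rewrite Hsym in Hu; cbv beta in Hu, Hv; fold u v in Hu, Hv.
    pose proof (Htri (f (2 * e)) (p u) (f (S (2 * e)))).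
    pose proof (Htri (p u) (p v) (f (S (2 * e)))).
    fold e in Hlarge; lra.
Qed.
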